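(* Let $X=\{x_j:j\in J\}\subset\mathbb{R}^2$ be finite with $n=|J|$. If $s\in\mathrm{conv}(\mathcal{M})$ and $s$ is equidistant from all points of $X$, then there exist weights $\tau_j\geq\frac{1}{n+1}$ ($j\in J$) with $\sum_j\tau_j=1$ and $s=\sum_j\tau_jx_j$.
   Context: $\mathcal{M}=\{M_j:j\in J\}$ with $M_j=\frac{1}{n+1}\big(x_j+\sum_{i\in J}x_i\big)$. *)

From HB Require Import structures.
From mathcomp Require Import all_boot all_order all_algebra.
From mathcomp Require Import reals.
Set Implicit Arguments. Unset Strict Implicit. Unset Printing Implicit Defensive.
Import Order.TTheory GRing.Theory Num.Theory.
Local Open Scope ring_scope.

Definition edist (R : realType) (a b : 'rV[R]_2) : R :=
  Num.sqrt (\sum_(i < 2) (a 0 i - b 0 i) ^+ 2).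

Definition in_conv (R : realType) (J : finType) (M : J -> 'rV[R]_2) (s : 'rV[R]_2) : Prop :=
  exists lam : J -> R,
    (forall j, 0 <= lam j) /\ \sum_j lam j = 1 /\ s = \sum_j lam j *: M j.

Definition Mpt (R : realType) (J : finType) (x : J -> 'rV[R]_2) (j : J) : 'rV[R]_2 :=
  (#|J|.+1)%:R^-1 *: (x j + \sum_i x i).

From HB Require Import structures.
From mathcomp Require Import all_boot all_order all_algebra.
From mathcomp Require Import reals.
Import Order.TTheory GRing.Theory Num.Theory.
Local Open Scope ring_scope.

(* Since M_j = (x_j + sum_i x_i) / (n+1), a convex combination sum_j lam_j M_j
   equals sum_j tau_j x_j with tau_j = (lam_j + 1) / (n+1) >= 1/(n+1). *)

Section ShiftedMeans.

Variables (R : numFieldType) (V : lmodType R) (J : finType).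
Variables (x : J -> V) (lam : J -> R).
Hypothesis lam1 : \sum_j lam j = 1.

Let c : R := (#|J|.+1)%:R^-1.

Lemma sum_shifted_weights : \sum_j c * (lam j + 1) = 1.
Proof.
rewrite -mulr_sumr big_split /= lam1 sumr_const addrC natr1.
by rewrite mulVf // pnatr_eq0.
Qed.

Lemma comb_shifted_means :
  \sum_j lam j *: (c *: (x j + \sum_i x i)) = \sum_j (c * (lam j + 1)) *: x j.
Proof.
under eq_bigr => j _ do rewrite scalerA mulrC -scalerA scalerDr.
rewrite -scaler_sumr big_split /= -scaler_suml lam1 scale1r.
under [RHS]eq_bigr => j _ do rewrite -scalerA scalerDl scale1r.
by rewrite -scaler_sumr big_split.
Qed.

End ShiftedMeans.

Lemma shifted_weight_ge (R : numFieldType) (n : nat) (l : R) :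
  0 <= l -> n.+1%:R^-1 <= n.+1%:R^-1 * (l + 1).
Proof.
by move=> l0; rewrite -{1}(mulr1 n.+1%:R^-1) ler_wpM2l ?invr_ge0 ?ler0n ?lerDr.
Qed.

Theorem lemma8 (R : realType) (J : finType) (x : J -> 'rV[R]_2)
  (x_inj : injective x) (s : 'rV[R]_2)
  (hs : in_conv (Mpt x) s)
  (heq : exists r : R, forall j : J, edist s (x j) = r) :
  exists tau : J -> R,
    (forall j, (#|J|.+1)%:R^-1 <= tau j) /\ \sum_j tau j = 1 /\
    s = \sum_j tau j *: x j.
Proof.
case: hs => lam [lam0 [lam1 ->]].
exists (fun j => (#|J|.+1)%:R^-1 * (lam j + 1)); split; [|split].
- by move=> j; apply: shifted_weight_ge.
- exact: sum_shifted_weights.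
- exact: comb_shifted_means.
Qed.
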